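(* Let $F : L_n \to \Delta K$ be a non-degenerate $2$-filtration and $p$ a path in $L_n$. Suppose simplex $\sigma$ is added to the 1-filtration induced by $p$ at the step $(i,j)\to(i+\delta_i,j+\delta_j)$, simplex $\tau$ is added at the step $(k,l)\to(k+\delta_k,l+\delta_l)$, and $\sigma$ and $\tau$ are paired in this 1-filtration. Then $\sigma$ and $\tau$ are paired in the 1-filtration induced by every path that takes these two steps.
   Context: $K$ is a finite simplicial complex, coefficients in a field. $L_n=\{0,\dots,n\}^2$ with product order, $\bot=(0,0)$, $\top=(n,n)$. A $2$-filtration is a monotone map $F$ from $L_n$ to subcomplexes of $K$ with $F(\bot)=\emptyset$, $F(\top)=K$. Lower corners of a simplex are the minimal elements of the upset of grades where it is present; $F$ is non-degenerate if any two distinct lower corners differ in both coordinates. A path is a sequence of grades $(0,0)=g_0,\dots,g_{2n}=(n,n)$ where each step $g_s\to g_{s+1}$ adds $(1,0)$ or $(0,1)$ (so $\delta$'s above are in $\{0,1\}$ with exactly one equal to $1$); it induces the 1-filtration $s\mapsto F(g_s)$, and a simplex is added at the step $g_s\to g_{s+1}$ if it lies in $F(g_{s+1})\setminus F(g_s)$ (by non-degeneracy at most one simplex per step). Two simplices are paired in such a 1-filtration if they form a pair of the standard persistence pairing (the negative simplex kills the class created by the positive one; equivalently via the lowest nonzero entries of a reduced matrix $R=DV$). *)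

From mathcomp Require Import all_boot all_order all_algebra.
Set Implicit Arguments. Unset Strict Implicit. Unset Printing Implicit Defensive.
Import GRing.Theory.
Local Open Scope ring_scope.

(* Grades of L_n are pairs (i,j) : nat * nat with i,j <= n; a 2-filtration is
   given as a map on nat*nat of which only the values on L_n matter. *)

Definition simplex_set (N : nat) := {set {set 'I_N}}.

Definition simplicial_complex (N : nat) (K : simplex_set N) : Prop :=
  set0 \notin K /\
  (forall s t : {set 'I_N}, s \in K -> t \subset s -> t != set0 -> t \in K).

Definition subcomplex (N : nat) (L K : simplex_set N) : Prop :=
  L \subset K /\
  (forall s t : {set 'I_N}, s \in L -> t \subset s -> t != set0 -> t \in L).

Definition in_box (n : nat) (g : nat * nat) : bool := ((g.1 <= n) && (g.2 <= n))%N.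
Definition gle (g h : nat * nat) : bool := ((g.1 <= h.1) && (g.2 <= h.2))%N.

Definition two_filtration (N n : nat) (K : simplex_set N)
  (F : nat * nat -> simplex_set N) : Prop :=
  (forall g, in_box n g -> subcomplex (F g) K) /\
  (forall g h, in_box n g -> in_box n h -> gle g h -> F g \subset F h) /\
  F (0, 0)%N = set0 /\ F (n, n) = K.

Definition lower_corner (N n : nat) (F : nat * nat -> simplex_set N)
  (s : {set 'I_N}) (g : nat * nat) : Prop :=
  in_box n g /\ s \in F g /\
  (forall h, gle h g -> h <> g -> s \notin F h).

Definition non_degenerate (N n : nat) (F : nat * nat -> simplex_set N) : Prop :=
  forall (s t : {set 'I_N}) (g h : nat * nat),
    lower_corner n F s g -> lower_corner n F t h -> (s, g) <> (t, h) ->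
    g.1 <> h.1 /\ g.2 <> h.2.

Definition is_path (n : nat) (p : nat -> nat * nat) : Prop :=
  p 0%N = (0, 0)%N /\ p (2 * n)%N = (n, n) /\
  (forall s, (s < 2 * n)%N ->
     p s.+1 = ((p s).1.+1, (p s).2) \/ p s.+1 = ((p s).1, (p s).2.+1)).

Definition added_at (N n : nat) (F : nat * nat -> simplex_set N)
  (p : nat -> nat * nat) (x : {set 'I_N}) (s : nat) : Prop :=
  (s < 2 * n)%N /\ x \in F (p s.+1) /\ x \notin F (p s).

Definition before (N n : nat) (F : nat * nat -> simplex_set N)
  (p : nat -> nat * nat) (x y : {set 'I_N}) : Prop :=
  exists s t, added_at n F p x s /\ added_at n F p y t /\ (s < t)%N.

(* Boundary matrix coefficient [a : b] (vertices ordered by their index). *)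
Definition bd (k : fieldType) (N : nat) (a b : {set 'I_N}) : k :=
  \sum_(v in b) (if a == b :\ v then (-1) ^+ #|[set w in b | (w < v)%N]| else 0).

Definition is_low (k : fieldType) (N : nat) (K : simplex_set N)
  (bef : {set 'I_N} -> {set 'I_N} -> Prop)
  (R : {set 'I_N} -> {set 'I_N} -> k) (b a : {set 'I_N}) : Prop :=
  a \in K /\ R a b != 0 /\
  (forall a', a' \in K -> a' != a -> R a' b != 0 -> bef a' a).

(* Standard persistence pairing: x (positive) and y (negative) are paired if
   for some upper-triangular invertible V, R = D V is reduced and low_R(y) = x. *)
Definition persistence_pair (k : fieldType) (N n : nat) (K : simplex_set N)
  (F : nat * nat -> simplex_set N) (p : nat -> nat * nat) (x y : {set 'I_N}) : Prop :=
  let bef := before n F p in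
  exists V : {set 'I_N} -> {set 'I_N} -> k,
    let R := fun a b => \sum_(c in K) bd k a c * V c b in
    (forall a b, a \in K -> b \in K -> V a b != 0 -> a = b \/ bef a b) /\
    (forall b, b \in K -> V b b != 0) /\
    (forall b1 b2 a, b1 \in K -> b2 \in K -> b1 != b2 ->
        is_low K bef R b1 a -> is_low K bef R b2 a -> False) /\
    y \in K /\ is_low K bef R y x.

Definition paired (k : fieldType) (N n : nat) (K : simplex_set N)
  (F : nat * nat -> simplex_set N) (p : nat -> nat * nat) (x y : {set 'I_N}) : Prop :=
  persistence_pair k n K F p x y \/ persistence_pair k n K F p y x.

From mathcomp Require Import all_boot all_order all_algebra.
From mathcomp Require Import fingroup perm.
From mathcomp Require Import zify.
From Stdlib Require Import Classical_Prop.
Set Implicit Arguments. Unset Strict Implicit. Unset Printing Implicit Defensive.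
Import GRing.Theory.
Local Open Scope ring_scope.

(* Fix the order in which a path p adds the simplices; non-degeneracy makes it
   total. Let r(u, v) be the rank of the block of the boundary matrix D with
   rows added at step >= u and columns added at step < v. As V is invertible
   upper triangular, D and R = D V have the same such ranks, and when the lows
   of R are distinct, r(u, v) counts the columns added before v whose low is
   added at step >= u. Hence, for x and y added at steps s and t, x is the low
   of y iff r(s, t+1) + r(s+1, t) = r(s+1, t+1) + r(s, t) + 1. Along p the
   block r(u, v) has rows K \ F(p u) and columns F(p v), so this condition only
   involves the grades p(s), p(s+1), p(t), p(t+1), which every path taking the
   same two steps visits as well. *)

(* Clearing column j is right multiplication by P = 1 - e_j^T e_j, whose kernel
   is the line of e_j; that line lies in the row space of A, spanned by row i. *)
Lemma mxrank_clear_col (k : fieldType) m n (A : 'M[k]_(m, n)) i j :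
  A i j != 0 -> (forall j', j' != j -> A i j' = 0) ->
  \rank A = (\rank (\matrix_(r, c) if c == j then 0 else A r c)).+1.
Proof.
move=> Aij_neq0 rowiA.
pose P : 'M[k]_n := 1%:M - delta_mx j j; set e : 'rV[k]_n := delta_mx 0 j.
have -> : \matrix_(r, c) (if c == j then 0 else A r c) = A *m P.
  apply/matrixP => r c; rewrite mulmxBr mulmx1 !mxE (bigD1 j) //= big1.
    by rewrite !mxE eqxx addr0; case: eqP => [->|_]; rewrite ?mulr1 ?subrr ?mulr0 ?subr0.
  by move=> l /negbTE lj; rewrite !mxE lj mulr0.
have rowiE : row i A = A i j *: e.
  apply/rowP => c; rewrite !mxE eqxx /=.
  by case: (eqVneq c j) => [->|/rowiA ->]; rewrite ?mulr1 ?mulr0.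
have eA : (e <= A)%MS.
  by rewrite -(eqmx_scale _ Aij_neq0) -rowiE row_sub.
have eP : (e <= kermx P)%MS.
  by rewrite sub_kermx mulmxBr mulmx1 mul_delta_mx subrr.
have kerP_e : (kermx P <= e)%MS.
  have kerPE : kermx P = kermx P *m delta_mx j j.
    by apply/eqP; rewrite -subr_eq0 -{1}[kermx P]mulmx1 -mulmxBr mulmx_ker.
  by rewrite kerPE -(mul_delta_mx (0 : 'I_1) j) mulmxA submxMl.
have rank_cap : \rank (A :&: kermx P) = 1%N.
  have rank_e : \rank e = 1%N by rewrite mxrank_delta.
  apply/eqP; rewrite eqn_leq -!rank_e.
  by rewrite !mxrankS // ?sub_capmx ?eA // (submx_trans (capmxSr _ _)).
by rewrite -(mxrank_mul_ker A P) rank_cap addn1.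
Qed.

Lemma det_trig_weight (k : fieldType) m (A : 'M[k]_m) (w : 'I_m -> nat) :
  (forall i j, A i j != 0 -> i = j \/ (w i < w j)%N) -> \det A = \prod_i A i i.
Proof.
move=> A_trig; rewrite /determinant (bigD1 (1%g : 'S_m)) //= [X in _ + X]big1 => [|s s_neq1].
  by rewrite odd_perm1 expr0 mul1r addr0; apply: eq_bigr => i _; rewrite perm1.
have [/forallP s_support|] := boolP [forall i, A i (s i) != 0]; last first.
  by move=> /forallPn [i]; rewrite negbK => /eqP Ai0; rewrite (bigD1 i) //= Ai0 mul0r mulr0.
(* Along the permutation s the weight never decreases, so it must be constant. *)
have w_le j : (w j <= w (s j))%N by case: (A_trig _ _ (s_support j)) => [<-|/ltnW].
case/eqP: s_neq1; apply/permP => i; rewrite perm1; apply/eqP/negPn/negP => si_neq_i.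
have w_lt : (w i < w (s i))%N.
  by case: (A_trig _ _ (s_support i)) => [/esym/eqP|//]; rewrite (negbTE si_neq_i).
have : (\sum_j w j = \sum_j w (s j))%N := reindex_inj (@perm_inj _ s).
rewrite (bigD1 i) //= [X in _ = X](bigD1 i) //= => /eqP; apply/negP.
by rewrite neq_ltn -addSn leq_add ?leq_sum.
Qed.

Section ColumnLows.
Variables (k : fieldType) (T : finType) (w : T -> nat).

Definition matrix_of (M : T -> T -> k) : 'M[k]_#|T| :=
  \matrix_(i, j) M (enum_val i) (enum_val j).

(* Shifted by one, so that 0 encodes a zero column. *)
Definition col_low (M : T -> T -> k) b := (\max_(a | M a b != 0%R) (w a).+1)%N.

Definition distinct_col_lows (M : T -> T -> k) :=
  forall b1 b2, b1 != b2 -> col_low M b1 = col_low M b2 -> col_low M b1 = 0%N.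

Lemma col_low_ge M a b : M a b != 0 -> ((w a).+1 <= col_low M b)%N.
Proof. by move=> Mab; apply: (@leq_bigmax_cond _ (fun a => M a b != 0) _ a Mab). Qed.

Lemma col_lowP M b : col_low M b != 0%N -> {a | M a b != 0 & col_low M b = (w a).+1}.
Proof.
move=> low_neq0; case: (pickP (fun a => M a b != 0)) => [a0 Ma0b|col0].
  have supp_gt0 : (0 < #|(fun a => M a b != 0%R)|)%N by apply/card_gt0P; exists a0.
  by case: (eq_bigmax_cond (fun a => (w a).+1) supp_gt0) => a; exists a.
by move: low_neq0; rewrite /col_low big_pred0.
Qed.

Definition restrict (S P : {set T}) (M : T -> T -> k) a b :=
  if (a \in S) && (b \in P) then M a b else 0.

Lemma eq_matrix_of (M1 M2 : T -> T -> k) : M1 =2 M2 -> matrix_of M1 = matrix_of M2.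
Proof. by move=> eq_M; apply/matrixP => i j; rewrite !mxE eq_M. Qed.

Lemma matrix_of_mul (M1 M2 : T -> T -> k) :
  matrix_of M1 *m matrix_of M2 = matrix_of (fun a b => \sum_c M1 a c * M2 c b).
Proof.
apply/matrixP => i j; rewrite !mxE (reindex (@enum_rank T)) /=.
  by apply: eq_bigr => c _; rewrite !mxE enum_rankK.
by apply: onW_bij; exact: enum_rank_bij.
Qed.

Lemma matrix_of_unitmx (M : T -> T -> k) :
  (forall a b, M a b != 0 -> a = b \/ (w a < w b)%N) -> (forall a, M a a != 0) ->
  matrix_of M \in unitmx.
Proof.
move=> M_trig M_diag; rewrite unitmxE unitfE.
rewrite (@det_trig_weight _ _ _ (fun i => w (enum_val i))).
  by apply/prodf_neq0 => i _; rewrite mxE.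
by move=> i j; rewrite mxE => /M_trig [/enum_val_inj ->|]; [left|right].
Qed.

Lemma matrix_of_clear_col M b0 :
  matrix_of (fun a b => if b == b0 then 0 else M a b) =
  \matrix_(r, c) if c == enum_rank b0 then 0 else matrix_of M r c.
Proof. by apply/matrixP => i j; rewrite !mxE -(can_eq enum_valK) enum_rankK. Qed.

Lemma max_col_low_row M b0 a0 :
  distinct_col_lows M -> (forall b, col_low M b <= col_low M b0)%N ->
  col_low M b0 = (w a0).+1 -> forall b, b != b0 -> M a0 b = 0.
Proof.
move=> distM b0_max low_b0 b b_neq_b0; apply/eqP/negPn/negP => Ma0b.
have low_b : col_low M b = col_low M b0.
  by apply/eqP; rewrite eqn_leq b0_max low_b0 col_low_ge.
by move: (col_low_ge Ma0b); rewrite (distM _ _ b_neq_b0 low_b).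
Qed.

(* Induction on the nonzero columns: a column of maximal low is alone in the row
   of its low, so clearing it lowers the rank by one. *)
Lemma mxrank_distinct_col_lows M :
  distinct_col_lows M -> \rank (matrix_of M) = #|[set b | col_low M b != 0%N]|.
Proof.
move: {2}#|_| (erefl #|[set b | col_low M b != 0%N]|) => c.
elim: c M => [|c IH] M nlows distM.
  rewrite (_ : matrix_of M = 0) ?mxrank0 //; apply/matrixP => i j; rewrite !mxE.
  apply/eqP/negPn/negP => /col_low_ge; move/eqP: nlows; rewrite cards_eq0.
  by move=> /eqP/setP/(_ (enum_val j)); rewrite !inE => /negbFE/eqP ->.
have [b1] : exists b1, b1 \in [set b | col_low M b != 0%N].
  by apply/card_gt0P; rewrite nlows.
rewrite inE -lt0n => low_b1.
have [b0 max_b0] : {b0 | (\max_b col_low M b)%N = col_low M b0}.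
  by apply: eq_bigmax; apply/card_gt0P; exists b1.
have b0_max b : (col_low M b <= col_low M b0)%N by rewrite -max_b0 leq_bigmax.
have low_b0 : col_low M b0 != 0%N by rewrite -lt0n (leq_trans low_b1).
have [a0 Ma0b0 low_a0] := col_lowP low_b0.
pose M' a b := if b == b0 then 0 else M a b.
have lowM' b : col_low M' b = if b == b0 then 0%N else col_low M b.
  by rewrite /col_low /M'; case: eqP => // _; rewrite big_pred0 // => a; rewrite eqxx.
rewrite (@mxrank_clear_col _ _ _ _ (enum_rank a0) (enum_rank b0)); first last.
- move=> j; rewrite mxE enum_rankK -(can_eq enum_valK) enum_rankK.
  exact: max_col_low_row.
- by rewrite mxE !enum_rankK.
have card_M' : #|[set b | col_low M b != 0%N]| = #|[set b | col_low M' b != 0%N]|.+1.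
  rewrite (cardsD1 b0) inE low_b0 add1n; congr _.+1; apply: eq_card => b.
  by rewrite !inE lowM'; case: (b == b0).
rewrite -matrix_of_clear_col -/M' (IH M') -?card_M' //.
  by apply/eqP; rewrite -eqSS -card_M' nlows.
move=> b b'; rewrite !lowM'; case: (b == b0) => //; case: (b' == b0) => //.
exact: distM.
Qed.

End ColumnLows.

Section Reduction.
Variables (k : fieldType) (N : nat).
Local Notation T := {set 'I_N}.
Variables (K : {set T}) (pos : T -> nat) (D : T -> T -> k).
Hypothesis pos_inj : {in K &, injective pos}.

Definition earlier a b := a \in K /\ b \in K /\ (pos a < pos b)%N.

Definition K_from u := [set a in K | (u <= pos a)%N].
Definition K_before v := [set a in K | (pos a < v)%N].

Definition mulDV (V : T -> T -> k) a b := \sum_(c in K) D a c * V c b.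

Definition upper (V : T -> T -> k) :=
  forall a b, a \in K -> b \in K -> V a b != 0 -> a = b \/ earlier a b.

Definition diag_neq0 (V : T -> T -> k) := forall b, b \in K -> V b b != 0.

Definition reduced (V : T -> T -> k) :=
  forall b1 b2 a, b1 \in K -> b2 \in K -> b1 != b2 ->
  is_low K earlier (mulDV V) b1 a -> is_low K earlier (mulDV V) b2 a -> False.

Definition low (V : T -> T -> k) := col_low pos (restrict K K (mulDV V)).

Lemma low_gt V a b : a \in K -> b \in K -> mulDV V a b != 0 -> (pos a < low V b)%N.
Proof. by move=> aK bK Rab; apply: (col_low_ge pos); rewrite /restrict aK bK. Qed.

Lemma low_leq V b u :
  (forall a, a \in K -> mulDV V a b != 0 -> (pos a < u)%N) -> (low V b <= u)%N.
Proof.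
move=> below_u; apply/bigmax_leqP => a; rewrite /restrict.
by case: (boolP (a \in K)) => [aK|]; case: (b \in K); rewrite ?eqxx //=; apply: below_u.
Qed.

Lemma lowP V b : low V b != 0%N ->
  {a | [/\ a \in K, mulDV V a b != 0 & low V b = (pos a).+1]}.
Proof.
move=> /col_lowP [a]; rewrite /restrict.
by case: (boolP (a \in K)); case: (b \in K); rewrite ?eqxx // => aK Rab; exists a.
Qed.

Lemma is_low_low V b a : b \in K ->
  is_low K earlier (mulDV V) b a <-> a \in K /\ low V b = (pos a).+1.
Proof.
move=> bK; split.
  move=> [aK [Rab others]]; split => //; apply/eqP; rewrite eqn_leq low_gt // andbT.
  apply: low_leq => a' a'K Ra'b; case: (eqVneq a' a) => [->//|a'_neq_a].
  by have [_ [_ lt_a'a]] := others a' a'K a'_neq_a Ra'b; rewrite ltnS ltnW.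
move=> [aK low_b]; have /lowP [a' [a'K Ra'b low_a']] : low V b != 0%N by rewrite low_b.
have <- : a' = a by apply: pos_inj => //; apply: succn_inj; rewrite -low_a' low_b.
split => //; split => // a'' a''K a''_neq Ra''b; split => //; split => //.
have := low_gt a''K bK Ra''b; rewrite low_a' ltnS leq_eqVlt => /orP [/eqP|//].
by move/pos_inj => /(_ a''K a'K) eq_a; case/eqP: a''_neq.
Qed.

Definition low_weight V := (\sum_(b in K) low V b)%N.

Definition add_col (V : T -> T -> k) b1 b2 (c : k) a b :=
  if b == b2 then V a b2 + c * V a b1 else V a b.

Lemma mulDV_add_col V b1 b2 c a b :
  mulDV (add_col V b1 b2 c) a b =
  if b == b2 then mulDV V a b2 + c * mulDV V a b1 else mulDV V a b.
Proof.
rewrite /mulDV /add_col; case: (b == b2) => //.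
by rewrite mulr_sumr -big_split; apply: eq_bigr => a' _; rewrite mulrDr mulrCA.
Qed.

Section AddEarlierColumn.
Variables (V : T -> T -> k) (b1 b2 : T) (c : k).
Hypotheses (V_upper : upper V) (b1K : b1 \in K) (b2K : b2 \in K).
Hypothesis b1_earlier : (pos b1 < pos b2)%N.

Lemma upper_add_col : upper (add_col V b1 b2 c).
Proof.
move=> a b aK bK; rewrite /add_col; case: (eqVneq b b2) => [->|_]; last exact: V_upper.
have [Vab2|/(V_upper aK b2K) //] := eqVneq (V a b2) 0.
have [->|Vab1] := eqVneq (V a b1) 0; first by rewrite Vab2 mulr0 addr0 eqxx.
move=> _; right; split => //; split => //.
by case: (V_upper aK b1K Vab1) => [->|[_ [_ /ltn_trans->]]].
Qed.

Lemma diag_neq0_add_col : diag_neq0 V -> diag_neq0 (add_col V b1 b2 c).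
Proof.
move=> V_diag b bK; rewrite /add_col; case: (eqVneq b b2) => [->|_]; last exact: V_diag.
have [Vb2b1|/(V_upper b2K b1K) [eq_b|[_ [_ lt_b]]]] := eqVneq (V b2 b1) 0.
- by rewrite Vb2b1 mulr0 addr0 V_diag.
- by move: b1_earlier; rewrite eq_b ltnn.
- by move: b1_earlier; rewrite ltnNge (ltnW lt_b).
Qed.

End AddEarlierColumn.

(* Clearing the common low of two columns by adding a multiple of the earlier
   one to the later one strictly lowers the later column's low. *)
Lemma reduction_step V b1 b2 a :
  upper V -> diag_neq0 V -> b1 \in K -> b2 \in K -> (pos b1 < pos b2)%N ->
  is_low K earlier (mulDV V) b1 a -> is_low K earlier (mulDV V) b2 a ->
  exists V', [/\ upper V', diag_neq0 V' & (low_weight V' < low_weight V)%N].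
Proof.
move=> V_upper V_diag b1K b2K lt_b12 low_b1 low_b2.
have [aK [Rab1 above_b1]] := low_b1; have [_ [Rab2 above_b2]] := low_b2.
pose V' := add_col V b1 b2 (- (mulDV V a b2 / mulDV V a b1)).
exists V'; split; [exact: upper_add_col | exact: diag_neq0_add_col |].
have low_b2_lt : (low V' b2 < low V b2)%N.
  have [_ ->] := (is_low_low V a b2K).1 low_b2; apply: low_leq => a' a'K.
  rewrite mulDV_add_col eqxx mulNr.
  case: (eqVneq a' a) => [->|a'_neq_a]; first by rewrite divfK // subrr eqxx.
  have [->|Ra'b2 _] := eqVneq (mulDV V a' b2) 0; last first.
    by have [_ [_ ->]] := above_b2 a' a'K a'_neq_a Ra'b2.
  have [->|Ra'b1 _] := eqVneq (mulDV V a' b1) 0; first by rewrite mulr0 subrr eqxx.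
  by have [_ [_ ->]] := above_b1 a' a'K a'_neq_a Ra'b1.
rewrite /low_weight (bigD1 b2) //= [X in (_ < X)%N](bigD1 b2) //= -addSn leq_add //.
rewrite leq_eqVlt; apply/orP; left; apply/eqP/eq_bigr => b /andP [_ b_neq_b2].
rewrite /low /col_low; apply: eq_bigl => a'.
by rewrite /restrict mulDV_add_col (negbTE b_neq_b2).
Qed.

Lemma exists_reduced : exists V, [/\ upper V, diag_neq0 V & reduced V].
Proof.
suff : forall m V, upper V -> diag_neq0 V -> low_weight V = m ->
    exists V, [/\ upper V, diag_neq0 V & reduced V].
  move/(_ _ (fun a b => (a == b)%:R)); apply=> // [a b _ _|b _]; last by rewrite eqxx oner_neq0.
  by case: (eqVneq a b) => [->|_]; [left | rewrite mulr0n eqxx].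
elim/ltn_ind => m IH V V_upper V_diag weight_V.
case: (classic (exists b1 b2 a, [/\ b1 \in K, b2 \in K, (pos b1 < pos b2)%N,
    is_low K earlier (mulDV V) b1 a & is_low K earlier (mulDV V) b2 a])).
  move=> [b1 [b2 [a [b1K b2K lt_b12 low_b1 low_b2]]]].
  have [V' [V'_upper V'_diag lt_weight]] :=
    reduction_step V_upper V_diag b1K b2K lt_b12 low_b1 low_b2.
  by apply: (IH (low_weight V') _ V') => //; rewrite -weight_V.
move=> no_conflict; exists V; split => // b1 b2 a b1K b2K b12_neq low_b1 low_b2.
case: (ltngtP (pos b1) (pos b2)) => [lt_b12|lt_b21|eq_pos].
- by apply: no_conflict; exists b1, b2, a.
- by apply: no_conflict; exists b2, b1, a.
- by move/eqP: b12_neq; apply; apply: pos_inj.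
Qed.

Definition extend_id (P : {set T}) (V : T -> T -> k) c b :=
  if (c \in P) && (b \in P) then V c b else (c == b)%:R.

Section InitialSegment.
Variables (V : T -> T -> k) (m : nat).
Hypotheses (V_upper : upper V) (V_diag : diag_neq0 V).
Local Notation P := (K_before m).

Lemma K_before_sub c : c \in P -> c \in K.
Proof. by rewrite inE => /andP []. Qed.

Lemma restrict_mulDV S a b :
  restrict S P (mulDV V) a b = \sum_c restrict S P D a c * extend_id P V c b.
Proof.
rewrite /restrict /extend_id; case: (boolP (a \in S)) => aS /=; last first.
  by rewrite big1 // => c _; rewrite mul0r.
case: (boolP (b \in P)) => bP /=; last first.
  rewrite big1 // => c _; case: (boolP (c \in P)) => cP; rewrite ?mul0r //=.
  by case: (eqVneq c b) => [c_eq_b|_]; [move: cP; rewrite c_eq_b (negbTE bP) | rewrite mulr0].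
rewrite /mulDV [LHS]big_mkcond /=; apply: eq_bigr => c _; rewrite andbT.
case: (boolP (c \in P)) => cP; first by rewrite K_before_sub.
rewrite mul0r; case: (boolP (c \in K)) => cK //; have [->|Vcb] := eqVneq (V c b) 0.
  by rewrite mulr0.
have [c_eq_b|[_ [_ lt_cb]]] := V_upper cK (K_before_sub bP) Vcb.
  by move: cP; rewrite c_eq_b bP.
by move: cP bP; rewrite !inE cK => /= /negP + /andP [_ /(ltn_trans lt_cb)].
Qed.

Lemma extend_id_unitmx : matrix_of (extend_id P V) \in unitmx.
Proof.
apply: (@matrix_of_unitmx _ _ pos) => [c b|b]; rewrite /extend_id; last first.
  by rewrite andbb; case: (boolP (b \in P)) => [/K_before_sub/V_diag|_]; rewrite ?eqxx ?oner_neq0.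
case: (eqVneq c b) => [->|c_neq_b]; first by left.
case: (boolP ((c \in P) && (b \in P))) => [/andP [cP bP]|_]; last by rewrite mulr0n eqxx.
by move=> /(V_upper (K_before_sub cP) (K_before_sub bP)) [->|[_ [_ ->]]]; [left|right].
Qed.

Lemma mxrank_restrict_mulDV S :
  \rank (matrix_of (restrict S P D)) = \rank (matrix_of (restrict S P (mulDV V))).
Proof.
rewrite (eq_matrix_of (restrict_mulDV S)) -matrix_of_mul mxrankMfree //.
by rewrite row_free_unit extend_id_unitmx.
Qed.

End InitialSegment.

Lemma col_low_restrict_reduced V u (P : {set T}) b : {subset P <= K} ->
  col_low pos (restrict (K_from u) P (mulDV V)) b =
  if (b \in P) && (u < low V b)%N then low V b else 0%N.
Proof.
rewrite /K_from => PK; have [bP|bP] /= := boolP (b \in P); last first.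
  by rewrite /col_low big_pred0 // => a; rewrite /restrict (negbTE bP) andbF eqxx.
have [u_lt|u_ge] := ltnP u (low V b).
  apply/eqP; rewrite eqn_leq; apply/andP; split.
    apply/bigmax_leqP => a; rewrite /restrict bP andbT inE.
    by case: (boolP ((a \in K) && _)) => [/andP [aK _] /(low_gt aK (PK _ bP))|]; rewrite ?eqxx.
  have /lowP [a [aK Rab low_b]] : low V b != 0%N by rewrite -lt0n (leq_trans _ u_lt).
  rewrite low_b; apply: (col_low_ge pos).
  by rewrite /restrict bP inE aK -ltnS -low_b u_lt.
rewrite /col_low big_pred0 // => a; rewrite /restrict bP inE andbT.
case: (boolP (a \in K)) => [aK|]; last by rewrite eqxx.
case: (eqVneq (mulDV V a b) 0) => [->|Rab]; first by rewrite if_same eqxx.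
by have := leq_trans (low_gt aK (PK _ bP) Rab) u_ge; rewrite ltnNge /= => /negbTE ->; rewrite eqxx.
Qed.

Lemma mxrank_restrict_reduced V u (P : {set T}) : reduced V -> {subset P <= K} ->
  \rank (matrix_of (restrict (K_from u) P (mulDV V))) =
  (\sum_(b in P) (u < low V b))%N.
Proof.
move=> V_reduced PK; rewrite (@mxrank_distinct_col_lows _ _ pos).
  rewrite -sum1_card [LHS]big_mkcond [RHS]big_mkcond /=; apply: eq_bigr => b _.
  rewrite inE col_low_restrict_reduced //.
  case: (b \in P) => //=; case: ltnP => [u_lt|_]; rewrite ?eqxx //.
  by rewrite -lt0n (leq_trans _ u_lt).
move=> b1 b2 b12_neq; rewrite !col_low_restrict_reduced //.
case: ifP => // /andP [b1P u_lt]; case: ifP => [/andP [b2P _] eq_low|_ low0]; last first.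
  by move: u_lt; rewrite low0.
have /lowP [a [aK _ low_b1]] : low V b1 != 0%N by rewrite -lt0n (leq_trans _ u_lt).
have low_a b : b \in P -> low V b = (pos a).+1 -> is_low K earlier (mulDV V) b a.
  by move=> bP low_b; apply/(is_low_low _ _ (PK _ bP)).
case: (V_reduced b1 b2 a (PK _ b1P) (PK _ b2P) b12_neq); apply: low_a => //.
by rewrite -eq_low.
Qed.

Definition rank_block u v := \rank (matrix_of (restrict (K_from u) (K_before v) D)).

(* The pairing lemma: the lows of a reduction are determined by ranks of blocks
   of D, hence do not depend on the reduction. *)
Lemma is_low_rank_block V x y :
  upper V -> diag_neq0 V -> reduced V -> x \in K -> y \in K ->
  is_low K earlier (mulDV V) y x <->
  (rank_block (pos x) (pos y).+1 + rank_block (pos x).+1 (pos y) =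
   (rank_block (pos x).+1 (pos y).+1 + rank_block (pos x) (pos y)).+1)%N.
Proof.
move=> V_upper V_diag V_reduced xK yK.
rewrite /rank_block !(mxrank_restrict_mulDV _ V_upper V_diag).
rewrite !mxrank_restrict_reduced //; try exact: K_before_sub.
set P := K_before (pos y); set Py := K_before (pos y).+1.
have split_above (Q : {set T}) : (\sum_(b in Q) (pos x < low V b) =
    \sum_(b in Q) ((pos x).+1 < low V b) + \sum_(b in Q) (low V b == (pos x).+1))%N.
  rewrite -big_split; apply: eq_bigr => b _ /=.
  by rewrite [in LHS]leq_eqVlt eq_sym; case: eqP => [->|_]; rewrite ?ltnn ?addn0.
have split_y : (\sum_(b in Py) (low V b == (pos x).+1) =
    (low V y == (pos x).+1) + \sum_(b in P) (low V b == (pos x).+1))%N.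
  rewrite (bigD1 y) /=; last by rewrite /Py inE yK /=.
  congr (_ + _)%N; apply: eq_bigl => b; rewrite /Py /P !inE ltnS.
  case: (eqVneq b y) => [->|b_neq_y]; first by rewrite ltnn !andbF.
  rewrite andbT leq_eqVlt; case: (boolP (b \in K)) => //= bK.
  by case: eqP => // /pos_inj eq_b; case/eqP: b_neq_y; apply: eq_b.
rewrite !split_above split_y (is_low_low _ _ yK); case: eqP => [low_y|low_y].
  by split=> // _; rewrite !addnA; lia.
by split=> [[] //|]; lia.
Qed.

End Reduction.

Lemma is_low_iff_rel (k : fieldType) N (K : {set {set 'I_N}})
    (bef1 bef2 : {set 'I_N} -> {set 'I_N} -> Prop) (R : {set 'I_N} -> {set 'I_N} -> k) b a :
  (forall a1 a2, bef1 a1 a2 <-> bef2 a1 a2) -> is_low K bef1 R b a <-> is_low K bef2 R b a.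
Proof.
move=> bef12; split=> [] [aK [Rab above]]; do 2!split=> //.
  by move=> a' a'K a'_neq Ra'b; apply/bef12; apply: above.
by move=> a' a'K a'_neq Ra'b; apply/bef12; apply: above.
Qed.

Section PathFiltration.
Variables (N n : nat) (K : {set {set 'I_N}}) (F : nat * nat -> {set {set 'I_N}}).
Hypothesis F_filt : two_filtration n K F.

Lemma gle_refl g : gle g g.
Proof. by rewrite /gle !leqnn. Qed.

Lemma gle_trans g h l : gle g h -> gle h l -> gle g l.
Proof. by move=> /andP [g1 g2] /andP [h1 h2]; rewrite /gle (leq_trans g1 h1) (leq_trans g2 h2). Qed.

Lemma lower_corner_below a g : in_box n g -> a \in F g ->
  exists2 g', lower_corner n F a g' & gle g' g.
Proof.
move: {2}(g.1 + g.2)%N.+1 (ltnSn (g.1 + g.2)) => m; elim: m g => // m IH g lt_gm box_g aFg.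
case: (classic (exists h, [/\ gle h g, h <> g & a \in F h])) => [[h [le_hg h_neq aFh]]|].
  have box_h : in_box n h.
    move: box_g le_hg; rewrite /in_box /gle => /andP [g1n g2n] /andP [h1g h2g].
    by rewrite (leq_trans h1g g1n) (leq_trans h2g g2n).
  have lt_hm : (h.1 + h.2 < m)%N.
    move: le_hg h_neq lt_gm; case: h {box_h aFh} => h1 h2; case: g {box_g aFg IH} => g1 g2.
    rewrite /gle /= => /andP [le1 le2] h_neq lt_gm.
    suff : (h1 + h2 < g1 + g2)%N by move=> ?; lia.
    by rewrite ltn_neqAle leq_add // andbT; apply/eqP => ?; apply: h_neq; congr pair; lia.
  have [g' lc_g' le_g'h] := IH h lt_hm box_h aFh.
  by exists g' => //; apply: gle_trans le_g'h le_hg.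
move=> no_lower; exists g; last exact: gle_refl.
by do 2!split=> //; move=> h le_hg h_neq; apply/negP => aFh; apply: no_lower; exists h.
Qed.

Section OnePath.
Variable p : nat -> nat * nat.
Hypothesis p_path : is_path n p.

Lemma path_gle s t : (s <= t)%N -> (t <= 2 * n)%N -> gle (p s) (p t).
Proof.
have [_ [_ p_step]] := p_path; elim: t => [|t IH].
  by rewrite leqn0 => /eqP -> _; apply: gle_refl.
rewrite leq_eqVlt => /orP [/eqP -> _|lt_st lt_tn]; first exact: gle_refl.
apply: gle_trans (IH lt_st (ltnW lt_tn)) _.
by case: (p_step t lt_tn) => ->; rewrite /gle /= ?leqnSn ?leqnn.
Qed.

Lemma path_in_box s : (s <= 2 * n)%N -> in_box n (p s).
Proof. by move=> le_sn; have := path_gle le_sn (leqnn _); case: p_path => [_ [-> _]]. Qed.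

Lemma path_mono s t : (s <= t)%N -> (t <= 2 * n)%N -> F (p s) \subset F (p t).
Proof.
move=> le_st le_tn; case: F_filt => [_ [F_mono _]].
by apply: F_mono; rewrite ?path_in_box ?path_gle // (leq_trans le_st).
Qed.

Lemma path_sub_K s a : (s <= 2 * n)%N -> a \in F (p s) -> a \in K.
Proof.
move=> /path_in_box box_s; case: F_filt => [F_sub _].
by have [/subsetP FK _] := F_sub _ box_s; apply: FK.
Qed.

Definition step_of a := (\max_(s < 2 * n | a \notin F (p s)) s)%N.

Lemma step_ofE a s : a \in K -> (s <= 2 * n)%N -> (a \in F (p s)) = (step_of a < s)%N.
Proof.
move=> aK le_sn; have [p0 [pn _]] := p_path; have [_ [_ [F0 Fn]]] := F_filt.
have n_gt0 : (0 < 2 * n)%N.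
  by rewrite lt0n; apply: contraTneq aK => /eqP; rewrite muln_eq0 /= -Fn => /eqP ->; rewrite F0 inE.
have absent_gt0 : (0 < #|(fun s : 'I_(2 * n) => a \notin F (p s))|)%N.
  by apply/card_gt0P; exists (Ordinal n_gt0); rewrite unfold_in /= p0 F0 inE.
have [s0 s0_absent step_a] := eq_bigmax_cond (fun s : 'I_(2 * n) => nat_of_ord s) absent_gt0.
rewrite /step_of step_a.
apply/idP/idP => [aF|lt_s0s].
  rewrite ltnNge; apply: contra s0_absent => le_ss0.
  by apply: subsetP aF; apply: path_mono; rewrite // ltnW.
apply: contraT => a_absent; move: le_sn; rewrite leq_eqVlt => /orP [/eqP s_eq|lt_sn].
  by move: a_absent; rewrite s_eq pn Fn aK.
have := @leq_bigmax_cond _ (fun s : 'I_(2 * n) => a \notin F (p s)) val (Ordinal lt_sn) a_absent.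
by rewrite /= step_a leqNgt lt_s0s.
Qed.

Lemma added_at_step a s : added_at n F p a s -> a \in K /\ step_of a = s.
Proof.
move=> [lt_sn [a_in a_out]]; have aK := path_sub_K lt_sn a_in.
move: a_in a_out; rewrite (step_ofE aK lt_sn) (step_ofE aK (ltnW lt_sn)) ltnS -leqNgt.
move=> le_as le_sa.
by split=> //; apply/eqP; rewrite eqn_leq le_as le_sa.
Qed.

Lemma added_at_step_of a : a \in K -> added_at n F p a (step_of a).
Proof.
move=> aK; have [_ [pn _]] := p_path; have [_ [_ [_ Fn]]] := F_filt.
have lt_an : (step_of a < 2 * n)%N by rewrite -step_ofE // pn Fn.
by split=> //; rewrite (step_ofE aK lt_an) (step_ofE aK (ltnW lt_an)) ltnn.
Qed.

Lemma before_earlier a b : before n F p a b <-> earlier K step_of a b.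
Proof.
split=> [[s [t [/added_at_step [aK <-] [/added_at_step [bK <-] lt_st]]]]|[aK [bK lt_ab]]] //.
exists (step_of a), (step_of b).
split; [exact: added_at_step_of | split; [exact: added_at_step_of | exact: lt_ab]].
Qed.

Lemma K_from_step_of s : (s <= 2 * n)%N -> K_from K step_of s = K :\: F (p s).
Proof.
move=> le_sn; apply/setP => a; rewrite !inE.
case: (boolP (a \in K)) => [aK|_]; last by rewrite andbF.
by rewrite (step_ofE aK le_sn) -leqNgt andbT.
Qed.

Lemma K_before_step_of s : (s <= 2 * n)%N -> K_before K step_of s = F (p s).
Proof.
move=> le_sn; apply/setP => a; rewrite inE.
case: (boolP (a \in K)) => [aK|aK]; first by rewrite (step_ofE aK le_sn).
by apply/esym/negbTE; apply: contra aK; apply: path_sub_K.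
Qed.

Lemma added_at_lower_corner a s : added_at n F p a s ->
  exists g, [/\ lower_corner n F a g, gle g (p s.+1) & ~~ gle g (p s)].
Proof.
move=> [lt_sn [a_in a_out]]; have [g lc_g le_g] := lower_corner_below (path_in_box lt_sn) a_in.
exists g; split=> //; apply: contra a_out => le_gs; have [box_g [a_g _]] := lc_g.
case: F_filt => [_ [F_mono _]].
by apply: subsetP a_g; apply: F_mono; rewrite // path_in_box // ltnW.
Qed.

(* Two simplices added at the same step have lower corners sharing the
   coordinate that this step leaves unchanged; non-degeneracy forbids that. *)
Lemma step_of_inj : non_degenerate n F -> {in K &, injective step_of}.
Proof.
move=> F_nondeg a b aK bK eq_step; case: (eqVneq a b) => // a_neq_b; exfalso.
have a_added := added_at_step_of aK; have := added_at_step_of bK; rewrite -eq_step.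
move: a_added; set s := step_of a => a_added b_added.
have [lt_sn _] := a_added; have [_ [_ p_step]] := p_path.
have [ga [lc_a a_le a_nle]] := added_at_lower_corner a_added.
have [gb [lc_b b_le b_nle]] := added_at_lower_corner b_added.
have pair_neq : (a, ga) <> (b, gb) by case=> /eqP; rewrite (negbTE a_neq_b).
have [ne1 ne2] := F_nondeg _ _ _ _ lc_a lc_b pair_neq.
move: a_le b_le a_nle b_nle; rewrite /gle; case: (p_step s lt_sn) => ->.
- move=> /andP [a1 a2] /andP [b1 b2] /=; rewrite a2 b2 !andbT -!ltnNge => a3 b3.
  by apply: ne1; apply/eqP; rewrite eqn_leq (leq_trans a1 b3) (leq_trans b1 a3).
- move=> /andP [a1 a2] /andP [b1 b2] /=; rewrite a1 b1 /= -!ltnNge => a3 b3.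
  by apply: ne2; apply/eqP; rewrite eqn_leq (leq_trans a2 b3) (leq_trans b2 a3).
Qed.

End OnePath.
End PathFiltration.

Section PairingAlongPath.
Variables (k : fieldType) (N n : nat) (K : {set {set 'I_N}}) (F : nat * nat -> {set {set 'I_N}}).
Hypotheses (F_filt : two_filtration n K F) (F_nondeg : non_degenerate n F).
Variable p : nat -> nat * nat.
Hypothesis p_path : is_path n p.
Local Notation bd := (@bd k N).
Local Notation pos := (step_of n F p).

Definition bd_rank g h := \rank (matrix_of (restrict (K :\: F g) (F h) bd)).

Definition pairing_condition g g' h h' : Prop :=
  (bd_rank g h' + bd_rank g' h = (bd_rank g' h' + bd_rank g h).+1)%N.

Lemma persistence_pairE x y :
  persistence_pair k n K F p x y <->
  exists V, [/\ upper K pos V, diag_neq0 K V, reduced K pos bd V, y \in K &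
               is_low K (earlier K pos) (mulDV K bd V) y x].
Proof.
have bef := before_earlier F_filt p_path.
have low_iff V b a := is_low_iff_rel K (mulDV K bd V) b a bef.
split=> [[V [V_upper [V_diag [V_reduced [yK low_yx]]]]]|[V [V_upper V_diag V_reduced yK low_yx]]].
  exists V; split=> //; last exact/low_iff.
    by move=> a b aK bK /(V_upper a b aK bK) [->|/bef]; [left|right].
  by move=> b1 b2 a b1K b2K b12_neq /low_iff low1 /low_iff low2; apply: (V_reduced b1 b2 a).
exists V; split; [|split; [by []|split; [|split; [by []|exact/low_iff]]]].
  by move=> a b aK bK /(V_upper a b aK bK) [->|/bef]; [left|right].
by move=> b1 b2 a b1K b2K b12_neq /low_iff low1 /low_iff low2; apply: (V_reduced b1 b2 a).
Qed.

Lemma rank_block_step_of u v : (u <= 2 * n)%N -> (v <= 2 * n)%N ->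
  rank_block K pos bd u v = bd_rank (p u) (p v).
Proof.
by move=> le_un le_vn; rewrite /rank_block K_from_step_of // K_before_step_of.
Qed.

Lemma persistence_pair_rank x y s t :
  added_at n F p x s -> added_at n F p y t ->
  persistence_pair k n K F p x y <-> pairing_condition (p s) (p s.+1) (p t) (p t.+1).
Proof.
move=> x_added y_added; have pos_inj := step_of_inj F_filt p_path F_nondeg.
have [xK pos_x] := added_at_step F_filt p_path x_added.
have [yK pos_y] := added_at_step F_filt p_path y_added.
have [[lt_sn _] [lt_tn _]] := (x_added, y_added).
have [le_sn le_tn] := (ltnW lt_sn, ltnW lt_tn).
have rank_cond V : upper K pos V -> diag_neq0 K V -> reduced K pos bd V ->
    is_low K (earlier K pos) (mulDV K bd V) y x <->
    pairing_condition (p s) (p s.+1) (p t) (p t.+1).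
  move=> V_upper V_diag V_reduced.
  have := is_low_rank_block pos_inj V_upper V_diag V_reduced xK yK.
  by rewrite pos_x pos_y !rank_block_step_of.
rewrite persistence_pairE; split=> [[V [V_upper V_diag V_reduced _ /rank_cond]]|cond]; first exact.
have [V [V_upper V_diag V_reduced]] := exists_reduced bd pos_inj.
by exists V; split=> //; apply/rank_cond.
Qed.

End PairingAlongPath.

Theorem mainTheorem6 (k : fieldType) (N n : nat) (K : {set {set 'I_N}})
  (F : nat * nat -> {set {set 'I_N}}) (p q : nat -> nat * nat)
  (sigma tau : {set 'I_N}) (s1 s2 t1 t2 : nat) :
  simplicial_complex K -> two_filtration n K F -> non_degenerate n F ->
  is_path n p ->
  added_at n F p sigma s1 -> added_at n F p tau s2 ->
  paired k n K F p sigma tau ->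
  is_path n q ->
  (t1 < 2 * n)%N -> q t1 = p s1 -> q t1.+1 = p s1.+1 ->
  (t2 < 2 * n)%N -> q t2 = p s2 -> q t2.+1 = p s2.+1 ->
  paired k n K F q sigma tau.
Proof.
move=> _ F_filt F_nondeg p_path sigma_p tau_p pair_p q_path.
move=> lt_t1 q_t1 q_t1S lt_t2 q_t2 q_t2S.
have [[_ [sigma_in sigma_out]] [_ [tau_in tau_out]]] := (sigma_p, tau_p).
have sigma_q : added_at n F q sigma t1 by split; rewrite // q_t1 q_t1S.
have tau_q : added_at n F q tau t2 by split; rewrite // q_t2 q_t2S.
have rank_p := persistence_pair_rank k F_filt F_nondeg p_path.
have rank_q := persistence_pair_rank k F_filt F_nondeg q_path.
case: pair_p => pair_p; [left|right].
- apply/(rank_q _ _ _ _ sigma_q tau_q); rewrite q_t1 q_t1S q_t2 q_t2S.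
  exact/(rank_p _ _ _ _ sigma_p tau_p).
- apply/(rank_q _ _ _ _ tau_q sigma_q); rewrite q_t1 q_t1S q_t2 q_t2S.
  exact/(rank_p _ _ _ _ tau_p sigma_p).
Qed.
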